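(* Let $n\ge 2$, let $\Omega$ be a compact subset of $\mathbb{R}^n$, let $v\in S^{n-1}$ and $b\in\mathbb{R}$. Then $b\ge l_{\Omega}(v)$ if and only if for every $x\in \Omega^+_{v,b}$ the closed line segment $\overline{xx'}$ joining $x$ and $x'=\mathrm{R}_{v,b}(x)$ is contained in $\Omega$.
   Context: $S^{n-1}$ is the unit sphere in $\mathbb{R}^n$. For $X\subset\mathbb{R}^n$, $v\in S^{n-1}$ and $b\in\mathbb{R}$, put $X^+_{v,b}=X\cap\{x\in\mathbb{R}^n : x\cdot v>b\}$, and let $\mathrm{R}_{v,b}$ be the reflection of $\mathbb{R}^n$ in the hyperplane $\{x : x\cdot v=b\}$. For a bounded $X\subset\mathbb{R}^n$, the level of the maximal cap in direction $v$ is $l_X(v)=\inf\{a : \mathrm{R}_{v,c}(X^+_{v,c})\subset X \text{ for every } c\ge a\}$. For $x,y\in\mathbb{R}^n$, $\overline{xy}$ denotes the closed line segment joining $x$ and $y$. *)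

From HB Require Import structures.
From mathcomp Require Import all_boot all_order all_algebra.
From mathcomp Require Import all_classical all_reals all_analysis.
Set Implicit Arguments. Unset Strict Implicit. Unset Printing Implicit Defensive.
Import Order.TTheory GRing.Theory Num.Theory.
Import numFieldNormedType.Exports.
Local Open Scope classical_set_scope.
Local Open Scope ring_scope.

Section Defs.
Variables (R : realType) (n : nat).

Definition dotp (x y : 'rV[R]_n) : R := \sum_(i < n) x ord0 i * y ord0 i.

Definition sphere : set 'rV[R]_n := [set v | dotp v v = 1].

Definition cap_plus (X : set 'rV[R]_n) (v : 'rV[R]_n) (b : R) : set 'rV[R]_n :=
  X `&` [set x | dotp x v > b].

(* reflection in the hyperplane {x . v = b} (v a unit vector) *)
Definition refl (v : 'rV[R]_n) (b : R) (x : 'rV[R]_n) : 'rV[R]_n :=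
  x - (2 * (dotp x v - b)) *: v.

Definition max_cap_level (X : set 'rV[R]_n) (v : 'rV[R]_n) : \bar R :=
  ereal_inf [set a%:E | a in
    [set a : R | forall c : R, a <= c -> refl v c @` cap_plus X v c `<=` X]].

Definition segment (x y : 'rV[R]_n) : set 'rV[R]_n :=
  [set (1 - t) *: x + t *: y | t in [set t : R | 0 <= t <= 1]].

End Defs.

From HB Require Import structures.
From mathcomp Require Import all_boot all_order all_algebra.
From mathcomp Require Import all_classical all_reals all_analysis.
From mathcomp Require Import ring lra.
Import Order.TTheory GRing.Theory Num.Theory.
Import numFieldNormedType.Exports.
Local Open Scope classical_set_scope.
Local Open Scope ring_scope.

(* Reflecting x at a level c between b and x.v moves x along v, to the point of
   the segment from x to its reflection at level b with parameter
   (x.v - c) / (x.v - b).  Hence every reflection at a level c >= b of a point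
   above c stays in Omega when all such segments do; conversely, when every
   level c > b is admissible, the segment minus its far endpoint consists of
   such reflections, and the endpoint is reached by closedness of Omega. *)

Section Segment.
Variables (R : realType) (n : nat).
Implicit Types (x w : 'rV[R]_n) (A : set 'rV[R]_n).

Lemma segment_subr x w :
  segment x (x - w) = [set x - t *: w | t in [set t : R | 0 <= t <= 1]].
Proof.
apply/seteqP; split=> _ [t t01 <-]; exists t => //;
  by rewrite scalerDr scalerN scalerBl scale1r addrA subrK.
Qed.

Lemma closed_subr_scale1 A x w :
  closed A -> (forall t : R, 0 <= t < 1 -> A (x - t *: w)) -> A (x - w).
Proof.
move=> clA Ahalf; pose u (m : nat) := x - (1 - harmonic m) *: w.
apply: (@closed_cvg _ _ \oo _ u _ clA).
  near=> m; apply: Ahalf.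
  rewrite subr_ge0 ltrBlDr ltrDl harmonic_gt0 andbT.
  by rewrite invf_le1 ?ler1n ?ltr0n.
have -> : x - w = x - (1 - 0) *: w by rewrite subr0 scale1r.
apply: cvgB; first exact: cvg_cst.
apply: cvgZ; last exact: cvg_cst.
by apply: cvgB; [exact: cvg_cst | exact: cvg_harmonic].
Unshelve. all: end_near.
Qed.

End Segment.

Section Reflection.
Variables (R : realType) (n : nat) (v : 'rV[R]_n).
Implicit Types (X : set 'rV[R]_n) (x : 'rV[R]_n) (b c t : R).

Definition refl_closed X c := refl v c @` cap_plus X v c `<=` X.

Lemma refl_interpolate t b x :
  refl v (dotp x v - t * (dotp x v - b)) x = x - t *: (x - refl v b x).
Proof.
by rewrite {2}/refl subKr scalerA /refl; congr (_ - _ *: _); ring.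
Qed.

Lemma refl_mem_segment b c x :
  b <= c -> c < dotp x v -> segment x (refl v b x) (refl v c x).
Proof.
move=> bc cx; have bx : b < dotp x v := le_lt_trans bc cx.
have xb0 : dotp x v - b != 0 by rewrite subr_eq0 gt_eqF.
rewrite -{1}(subKr x (refl v b x)) segment_subr.
exists ((dotp x v - c) / (dotp x v - b)).
  rewrite /= divr_ge0 ?subr_ge0 ?(ltW cx) ?(ltW bx) //=.
  by rewrite ler_pdivrMr ?subr_gt0 // mul1r lerB.
by rewrite -refl_interpolate mulfVK // subKr.
Qed.

Lemma segment_refl_sub_closed X b x :
  closed X -> (forall c, b < c -> refl_closed X c) ->
  X x -> b < dotp x v -> segment x (refl v b x) `<=` X.
Proof.
move=> clX admissible Xx bx.
have Xhalf t : 0 <= t < 1 -> X (x - t *: (x - refl v b x)).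
  case/andP=> t0 t1; have [->|tn0] := eqVneq t 0; first by rewrite scale0r subr0.
  have tp : 0 < t by rewrite lt0r tn0.
  have tdb : t * (dotp x v - b) < dotp x v - b.
    by rewrite -[X in _ < X]mul1r ltr_pM2r ?subr_gt0.
  rewrite -refl_interpolate; apply: (admissible (dotp x v - t * (dotp x v - b))).
    lra.
  by exists x => //; split => //; rewrite /= ltrBlDr ltrDl mulr_gt0 ?subr_gt0.
rewrite -{1}(subKr x (refl v b x)) segment_subr => _ [t /andP[t0 t1] <-].
have [tl1|] := ltP t 1; first by apply: Xhalf; rewrite t0 tl1.
move=> t1'; have -> : t = 1 by apply/le_anti; rewrite t1 t1'.
by rewrite scale1r; exact: closed_subr_scale1.
Qed.

Lemma max_cap_level_le_refl_closed X b c :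
  (max_cap_level X v <= b%:E)%E -> b < c -> refl_closed X c.
Proof.
move=> lb bc; have bcE : (b%:E < c%:E)%E by rewrite lte_fin.
have [_ [a adm <-]] := ereal_inf_lt (le_lt_trans lb bcE).
by rewrite lte_fin => ac; exact: adm (ltW ac).
Qed.

Lemma max_cap_level_le X b :
  (forall c, b <= c -> refl_closed X c) -> (max_cap_level X v <= b%:E)%E.
Proof. by move=> adm; apply: ereal_inf_lbound; exists b. Qed.

End Reflection.

Theorem lemma2p1 (R : realType) (n : nat) (Omega : set 'rV[R]_n)
    (v : 'rV[R]_n) (b : R) :
  (2 <= n)%N -> compact Omega -> sphere v ->
  ((max_cap_level Omega v <= b%:E)%E <->
   (forall x, cap_plus Omega v b x -> segment x (refl v b x) `<=` Omega)).
Proof.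
move=> _ cO _; split.
- move=> lb x [Ox bx]; apply: segment_refl_sub_closed => // [|c].
    by apply: compact_closed cO; exact: norm_hausdorff.
  exact: max_cap_level_le_refl_closed.
- move=> seg; apply: max_cap_level_le => c bc _ [y [Oy cy] <-].
  by apply: (seg y); [split; last exact: le_lt_trans cy | exact: refl_mem_segment].
Qed.
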